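(* Consider a connected one-dimensional network of $m$ springs on $n$ nodes with kinematic matrix $D$ and $q$ displacement-controlled loadings with incidence matrix $R$ satisfying $\mathrm{rank}(R^\top D)=q$. Assume $q=n-2$ and that no spring is blocked by the displacement-controlled loadings. Then for every $x\in U\setminus\{0\}$, where $U=\{x\in D\mathbb{R}^n:R^\top x=0\}$, one has $x_i\neq0$ for all $i\in\{1,\dots,m\}$.
   Context: Spring $k$ joins left node $i_k$ to right node $j_k\neq i_k$; the graph is connected; $D$ is the $m\times n$ matrix with $(D\xi)_k=\xi_{j_k}-\xi_{i_k}$. Displacement-controlled loading $k$ prescribes $\xi_{J_k}-\xi_{I_k}=l_k(t)$; $R^k\in\{-1,0,1\}^m$ is the signed incidence vector of a chain of springs from $I_k$ to $J_k$, so $(R^k)^\top D\xi=\xi_{J_k}-\xi_{I_k}$; $R=(R^1,\dots,R^q)$. A spring $i$ is blocked by the displacement-controlled loadings if the family of pairs $\{I_k,J_k\}$, $k=1,\dots,q$, contains a chain connecting one endpoint of spring $i$ with its other endpoint. *)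

From mathcomp Require Import all_boot all_order all_algebra.
Set Implicit Arguments. Unset Strict Implicit. Unset Printing Implicit Defensive.
Import GRing.Theory Num.Theory.
Local Open Scope ring_scope.

(* Spring network: spring k : 'I_m joins left node [lft k] to right node [rgt k]. *)

Definition kinematic (R : nzRingType) (m n : nat) (lft rgt : 'I_m -> 'I_n)
  : 'M[R]_(m, n) :=
  \matrix_(k < m, v < n) ((v == rgt k)%:R - (v == lft k)%:R).

Definition spring_adj (m n : nat) (lft rgt : 'I_m -> 'I_n) : rel 'I_n :=
  fun x y => [exists k : 'I_m, ((lft k == x) && (rgt k == y))
                              || ((lft k == y) && (rgt k == x))].

Definition connected_network (m n : nat) (lft rgt : 'I_m -> 'I_n) : Prop :=
  forall x y : 'I_n, connect (spring_adj lft rgt) x y.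

(* A chain of springs, given as a sequence of (spring, orientation) pairs:
   orientation true = traversed from left node to right node,
   false = traversed from right node to left node. [chain_from a b c] says
   the chain c starts at node a and ends at node b. *)
Fixpoint chain_from (m n : nat) (lft rgt : 'I_m -> 'I_n) (a b : 'I_n)
    (c : seq ('I_m * bool)) : bool :=
  match c with
  | [::] => a == b
  | (s, d) :: c' =>
      (if d then lft s == a else rgt s == a)
      && chain_from lft rgt (if d then rgt s else lft s) b c'
  end.

Definition chain_incidence (R : nzRingType) (m : nat) (c : seq ('I_m * bool))
  : 'cV[R]_m :=
  \col_(k < m) (\sum_(p <- c | p.1 == k) (if p.2 then 1 else -1)).

Definition is_incidence_matrix (R : nzRingType) (m n q : nat)
    (lft rgt : 'I_m -> 'I_n) (I J : 'I_q -> 'I_n) (Rm : 'M[R]_(m, q)) : Prop :=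
  forall k : 'I_q, exists c : seq ('I_m * bool),
    [/\ chain_from lft rgt (I k) (J k) c, uniq (map fst c)
      & col k Rm = chain_incidence R c].

Definition loading_adj (n q : nat) (I J : 'I_q -> 'I_n) : rel 'I_n :=
  fun x y => [exists k : 'I_q, ((I k == x) && (J k == y))
                              || ((I k == y) && (J k == x))].

Definition blocked (m n q : nat) (lft rgt : 'I_m -> 'I_n) (I J : 'I_q -> 'I_n)
    (s : 'I_m) : bool :=
  connect (loading_adj I J) (lft s) (rgt s).

From mathcomp Require Import all_boot all_order all_algebra.
From mathcomp Require Import ring.
Set Implicit Arguments. Unset Strict Implicit. Unset Printing Implicit Defensive.
Import GRing.Theory Num.Theory.
Local Open Scope ring_scope.

(* Write [x = D xi].  The chains of [R] telescope, so [R^T D] is the kinematic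
   matrix of the loading graph, whose kernel consists of the node functions
   taking equal values at both ends of every loading.  This kernel has dimension
   [n - q = 2], yet it contains the constants, [xi] and the indicator [eta] of
   the loading component of [lft i].  If [x_i = 0] these three are linearly
   independent: [xi] agrees at the two ends of spring [i] while [eta] does not
   (spring [i] is not blocked), and [xi] is not constant since [x != 0]. *)

Section Kinematic.

Variables (R : nzRingType) (m n : nat) (lft rgt : 'I_m -> 'I_n).

Lemma row_kinematic k :
  row k (kinematic R lft rgt) = 'e_(rgt k) - 'e_(lft k).
Proof. by apply/rowP => y; rewrite !mxE eqxx. Qed.

Lemma mul_kinematic_mxE p (B : 'M[R]_(n, p)) k j :
  (kinematic R lft rgt *m B) k j = B (rgt k) j - B (lft k) j.
Proof.
have := congr1 (fun v : 'rV_p => v 0 j) (row_mul k (kinematic R lft rgt) B).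
by rewrite row_kinematic mulmxBl -!rowE !mxE.
Qed.

Lemma mul_kinematic_eq0 p (B : 'M[R]_(n, p)) :
  (kinematic R lft rgt *m B == 0) =
  [forall k, forall j, B (lft k) j == B (rgt k) j].
Proof.
apply/eqP/forallP => [BK k | BK]; last first.
  apply/matrixP => k j.
  by rewrite mul_kinematic_mxE mxE (eqP (forallP (BK k) j)) subrr.
apply/forallP => j; have := congr1 (fun M : 'M[R]_(m, p) => M k j) BK.
by rewrite mul_kinematic_mxE mxE => /eqP; rewrite subr_eq0 eq_sym.
Qed.

Lemma chain_incidence_cons (s : 'I_m) (d : bool) c :
  chain_incidence R ((s, d) :: c) =
  (if d then 1 else -1) *: delta_mx s 0 + chain_incidence R c.
Proof.
apply/colP => k; rewrite !mxE big_cons /= eq_sym.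
by case: (k == s); rewrite ?mulr1 ?mulr0 ?add0r.
Qed.

Lemma chain_incidence_kinematic a b c :
  chain_from lft rgt a b c ->
  (chain_incidence R c)^T *m kinematic R lft rgt = 'e_b - 'e_a.
Proof.
elim: c a => [|[s d] c IHc] a /=.
  move/eqP->; rewrite subrr; apply/matrixP => i j.
  by rewrite !mxE big1 ?mul0r // => k _; rewrite !mxE big_nil mul0r.
rewrite chain_incidence_cons linearD linearZ /= trmx_delta mulmxDl -scalemxAl.
rewrite -rowE row_kinematic; case: d => /andP[/eqP <- /IHc ->].
  by rewrite scale1r addrC addrA subrK.
by rewrite scaleN1r opprB addrC addrA subrK.
Qed.

End Kinematic.

Lemma incidence_kinematic (R : nzRingType) m n q (lft rgt : 'I_m -> 'I_n)
    (I J : 'I_q -> 'I_n) (Rm : 'M[R]_(m, q)) :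
  is_incidence_matrix lft rgt I J Rm ->
  Rm^T *m kinematic R lft rgt = kinematic R I J.
Proof.
move=> Rm_chains; apply/row_matrixP => k.
have [c [chain_c _ col_c]] := Rm_chains k.
by rewrite row_mul -tr_col col_c (chain_incidence_kinematic R chain_c) row_kinematic.
Qed.

Lemma connect_loading_pair n q (I J : 'I_q -> 'I_n) a k :
  connect (loading_adj I J) a (I k) = connect (loading_adj I J) a (J k).
Proof.
have sym_adj : symmetric (loading_adj I J).
  by move=> x y; apply/existsP/existsP => -[k' e]; exists k'; rewrite orbC.
apply: (same_connect1r (sym_connect_sym sym_adj)).
by apply/existsP; exists k; rewrite !eqxx.
Qed.

Lemma ker_cols_dependent (F : fieldType) q n p
    (A : 'M[F]_(q, n)) (S : 'M[F]_(n, p)) :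
  A *m S = 0 -> (n < \rank A + p)%N -> exists2 u : 'cV_p, u != 0 & S *m u = 0.
Proof.
move=> AS0 rank_big.
have S_ker : (S^T <= kermx A^T)%MS by apply/sub_kermxP; rewrite -trmx_mul AS0 trmx0.
have : ~~ row_free S^T.
  rewrite /row_free; apply: contraTN rank_big => /eqP rankS.
  rewrite -leqNgt -leq_subRL ?rank_leq_col // -rankS.
  by rewrite -(mxrank_tr A) -mxrank_ker mxrankS.
rewrite -kermx_eq0 => /rowV0Pn[v /sub_kermxP vS v_neq0].
exists v^T; first by rewrite trmx_eq0.
by rewrite -(trmxK S) -trmx_mul vS trmx0.
Qed.

Lemma affine_relation_trivial (F : idomainType) (T : Type) (f g : T -> F)
    (a b c : F) (y1 y2 z1 z2 : T) :
  (forall y, a + f y * b + g y * c = 0) ->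
  f y1 = f y2 -> g y1 != g y2 -> f z1 != f z2 ->
  [/\ a = 0, b = 0 & c = 0].
Proof.
move=> rel fy gy fz.
have diff y y' : (f y - f y') * b + (g y - g y') * c = 0.
  by rewrite -[RHS](subrr 0) -{1}(rel y) -(rel y'); ring.
have c0 : c = 0.
  have /eqP := diff y1 y2; rewrite fy subrr mul0r add0r mulf_eq0 subr_eq0.
  by rewrite (negbTE gy) => /eqP.
have b0 : b = 0.
  have /eqP := diff z1 z2; rewrite c0 mulr0 addr0 mulf_eq0 subr_eq0.
  by rewrite (negbTE fz) => /eqP.
by split=> //; have := rel y1; rewrite b0 c0 !mulr0 !addr0.
Qed.

Lemma rank_kinematic_add3_le (F : fieldType) n q (I J : 'I_q -> 'I_n)
    (f g : 'I_n -> F) (y1 y2 z1 z2 : 'I_n) :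
  (forall k, f (I k) = f (J k)) -> (forall k, g (I k) = g (J k)) ->
  f y1 = f y2 -> g y1 != g y2 -> f z1 != f z2 ->
  (\rank (kinematic F I J) + 3 <= n)%N.
Proof.
move=> f_loading g_loading fy gy fz; rewrite leqNgt; apply/negP => rank_big.
pose S := \matrix_(y < n, r < 3) [:: 1; f y; g y]`_r.
have S_ker : kinematic F I J *m S = 0.
  apply/eqP; rewrite mul_kinematic_eq0; apply/forallP => k; apply/forallP => r.
  by rewrite !mxE f_loading g_loading; case: r => [[|[|[|r]]] ?].
have [u /negP u_neq0 Su0] := ker_cols_dependent S_ker rank_big; apply: u_neq0.
have [u0 u1 u2] : [/\ u ord0 0 = 0, u (lift ord0 ord0) 0 = 0
                    & u (lift ord0 (lift ord0 ord0)) 0 = 0].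
  apply: (affine_relation_trivial _ fy gy fz) => y.
  have := congr1 (fun M : 'cV[F]_n => M y 0) Su0.
  by rewrite !mxE !big_ord_recl big_ord0 !mxE /= mul1r addr0 addrA.
apply/eqP/colP => -[[|[|[|r]]] lt_r] //; rewrite mxE;
  [rewrite -u0 | rewrite -u1 | rewrite -u2]; by congr (u _ 0); apply: val_inj.
Qed.

Theorem lemma2 (R : realFieldType) (m n q : nat)
    (lft rgt : 'I_m -> 'I_n) (I J : 'I_q -> 'I_n) (Rm : 'M[R]_(m, q)) :
  (forall k : 'I_m, lft k != rgt k) ->
  connected_network lft rgt ->
  is_incidence_matrix lft rgt I J Rm ->
  \rank (Rm^T *m kinematic R lft rgt) = q ->
  (q + 2 = n)%N ->
  (forall s : 'I_m, ~~ blocked lft rgt I J s) ->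
  forall x : 'cV[R]_m,
    (exists xi : 'cV[R]_n, x = kinematic R lft rgt *m xi) ->
    Rm^T *m x = 0 ->
    x != 0 ->
    forall i : 'I_m, x i 0 != 0.
Proof.
move=> _ _ Rm_chains rankRD q2n not_blocked _ [xi ->] Rx0 x_neq0 i.
have RD := incidence_kinematic Rm_chains.
rewrite RD in rankRD; rewrite mulmxA RD in Rx0.
have xi_loading k : xi (I k) 0 = xi (J k) 0.
  by move/eqP: Rx0; rewrite mul_kinematic_eq0 => /forallP/(_ k)/forallP/(_ 0)/eqP.
have [j xi_nonconst] : exists j, xi (lft j) 0 != xi (rgt j) 0.
  move: x_neq0; rewrite mul_kinematic_eq0 negb_forall => /existsP[j].
  by rewrite negb_forall => /existsP[k]; rewrite (ord1 k); exists j.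
pose eta y : R := (connect (loading_adj I J) (lft i) y)%:R.
have eta_loading k : eta (I k) = eta (J k) by rewrite /eta connect_loading_pair.
have eta_i : eta (rgt i) != eta (lft i).
  have /negbTE := not_blocked i; rewrite /eta connect0 /blocked => ->.
  by rewrite eq_sym oner_eq0.
apply/negP; rewrite mul_kinematic_mxE subr_eq0 => /eqP xi_i.
have := rank_kinematic_add3_le (f := fun y => xi y 0)
  xi_loading eta_loading xi_i eta_i xi_nonconst.
by rewrite rankRD -q2n leq_add2l.
Qed.
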